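(* Under assumption (A3), at any round $t$, for any fixed unit vector $\theta\in\mathbb R^d$ and for any arm $a_t\in\mathcal A_t$ selected by the agent (possibly depending on $\mathcal A_t$ and the history), $$\mathbb E_t\big[(\theta^\top x_{a_t})^2\,\big|\,|\mathcal A_t|\big]\ \ge\ \tilde\lambda_x:=\int_0^{\lambda_x}\Big(1-e^{-\frac{(\lambda_x-s)^2}{2\sigma^2}}\Big)^K\,ds,$$ where $K$ is an upper bound on $|\mathcal A_t|$ for all $t$.
   Context: Assumption (A3): at each round $t$ the arm set $\mathcal A_t$ has at most $K$ arms, and the feature vectors $x_a$, $a\in\mathcal A_t$, are drawn independently (of each other and of the past) from a fixed distribution $\rho$ on $\{x\in\mathbb R^d:\|x\|_2\le1\}$, with $\lambda_x:=\lambda_{\min}(\mathbb E_{x\sim\rho}[xx^\top])>0$; moreover for every fixed unit vector $z$ the centered variable $(z^\top x)^2-\mathbb E[(z^\top x)^2]$, $x\sim\rho$, is sub-Gaussian with variance proxy at most $\sigma^2$ (so that $\mathbb P((z^\top x)^2-\mathbb E[(z^\top x)^2]<-s)\le e^{-s^2/(2\sigma^2)}$ for $s>0$). $\mathbb E_t[\cdot]$ denotes conditional expectation given $(i_1,\mathcal A_1,r_1),\dots,(i_{t-1},\mathcal A_{t-1},r_{t-1}),i_t$. *)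

From HB Require Import structures.
From mathcomp Require Import all_boot all_order all_algebra.
From mathcomp Require Import all_classical all_reals all_analysis.
Set Implicit Arguments. Unset Strict Implicit. Unset Printing Implicit Defensive.
Import Order.TTheory GRing.Theory Num.Theory.
Import numFieldNormedType.Exports.
Local Open Scope classical_set_scope.
Local Open Scope ring_scope.

Definition vecB (R : realType) (d : nat) := g_sigma_algebraType (@open 'rV[R]_d).

Definition dotv (R : realType) (d : nat) (u v : 'rV[R]_d) : R :=
  \sum_(j < d) u 0 j * v 0 j.
Definition norm2 (R : realType) (d : nat) (u : 'rV[R]_d) : R :=
  Num.sqrt (dotv u u).

Definition second_moment (R : realType) (d : nat) (rho : probability (vecB R d) R)
  : 'M[R]_d :=
  \matrix_(i, j) Rintegral rho setT (fun x : vecB R d => x 0 i * x 0 j).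

Definition is_lambda_min (R : realType) (d : nat) (M : 'M[R]_d) (lam : R) : Prop :=
  eigenvalue M lam /\ (forall a, eigenvalue M a -> lam <= a).

Definition subgauss_sq_proj (R : realType) (d : nat) (rho : probability (vecB R d) R)
  (s2 : R) : Prop :=
  forall z : 'rV[R]_d, norm2 z = 1 ->
  forall t : R,
    (\int[rho]_(x in setT)
       (expR (t * ((dotv z x) ^+ 2
                   - Rintegral rho setT (fun y : vecB R d => (dotv z y) ^+ 2))))%:E
     <= (expR (s2 * t ^+ 2 / 2))%:E)%E.

Definition iid_law (d0 : measure_display) (O : measurableType d0) (R : realType)
  (P : probability O R) (d k : nat) (rho : probability (vecB R d) R)
  (X : 'I_k -> O -> vecB R d) : Prop :=
  forall B : 'I_k -> set (vecB R d), (forall i, measurable (B i)) ->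
    P (\bigcap_(i in [set: 'I_k]) (X i @^-1` B i)) = (\prod_(i < k) rho (B i))%E.

(* Let Z := (theta^T x_{a_t})^2.  By the layer-cake formula E[Z] >= int_0^lam P(Z > s) ds,
   and whichever arm the agent picks, Z > s as soon as every one of the k arms satisfies
   (theta^T x)^2 > s, so by independence P(Z > s) >= rho(Y > s)^k with Y := (theta^T x)^2,
   x ~ rho.  Now E[Y] = theta^T E[x x^T] theta >= lam_x (a minimiser of the Rayleigh quotient
   on the unit sphere is an eigenvector), and the Chernoff bound for the sub-Gaussian
   variable Y - E[Y] gives rho(Y <= s) <= exp(-(lam_x - s)^2 / (2 sigma^2)) for s <= lam_x.
   Finally k <= K and the base lies in [0, 1]. *)

From HB Require Import structures.
From mathcomp Require Import all_boot all_order all_algebra.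
From mathcomp Require Import all_classical all_reals all_analysis.
From mathcomp Require Import ring lra.
Import Order.TTheory GRing.Theory Num.Theory.
Import numFieldNormedType.Exports.
Local Open Scope classical_set_scope.
Local Open Scope ring_scope.

Section inner_product.
Context {R : realType} {d : nat}.
Implicit Types (u v w : 'rV[R]_d) (M : 'M[R]_d).

Lemma dotvC u v : dotv u v = dotv v u.
Proof. by apply: eq_bigr => j _; rewrite mulrC. Qed.

Lemma dotvDl u v w : dotv (u + v) w = dotv u w + dotv v w.
Proof. by rewrite /dotv -big_split; apply: eq_bigr => j _; rewrite mxE mulrDl. Qed.

Lemma dotvZl a u w : dotv (a *: u) w = a * dotv u w.
Proof. by rewrite /dotv mulr_sumr; apply: eq_bigr => j _; rewrite mxE mulrA. Qed.

Lemma dotvDr u v w : dotv w (u + v) = dotv w u + dotv w v.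
Proof. by rewrite dotvC dotvDl !(dotvC w). Qed.

Lemma dotvZr a u w : dotv w (a *: u) = a * dotv w u.
Proof. by rewrite dotvC dotvZl dotvC. Qed.

Lemma dotvNr u w : dotv w (- u) = - dotv w u.
Proof. by rewrite -scaleN1r dotvZr mulN1r. Qed.

Lemma dot0v u : dotv 0 u = 0.
Proof. by rewrite -(scale0r 0) dotvZl mul0r. Qed.

Lemma dotv_mulmx u v M : dotv u (v *m M) = (v *m M *m u^T) 0 0.
Proof. by rewrite [RHS]mxE; apply: eq_bigr => j _; rewrite [u^T _ _]mxE mulrC. Qed.

Lemma dotv_mulmx_sym u v M : M^T = M -> dotv u (v *m M) = dotv v (u *m M).
Proof.
move=> MT; rewrite !dotv_mulmx.
have -> : u *m M *m v^T = (v *m M *m u^T)^T by rewrite !trmx_mul trmxK MT mulmxA.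
by rewrite [in RHS]mxE.
Qed.

Lemma sqr_coord_le_dotv u j : u 0 j ^+ 2 <= dotv u u.
Proof.
rewrite /dotv (bigD1 j) //= expr2 lerDl; apply: sumr_ge0 => i _.
by rewrite -expr2 sqr_ge0.
Qed.

Lemma dotv_ge0 u : 0 <= dotv u u.
Proof. by apply: sumr_ge0 => j _; rewrite -expr2 sqr_ge0. Qed.

Lemma dotv_eq0 u : dotv u u = 0 -> u = 0.
Proof.
move=> u0; apply/rowP => j; rewrite mxE; apply/eqP; rewrite -sqrf_eq0 eq_le.
by rewrite sqr_ge0 andbT -u0 sqr_coord_le_dotv.
Qed.

Lemma norm2_eq1 u : norm2 u = 1 -> dotv u u = 1.
Proof. by move=> u1; rewrite -[LHS]sqr_sqrtr ?dotv_ge0 // -/(norm2 u) u1 expr1n. Qed.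

Lemma norm2_le1 u : (norm2 u <= 1) = (dotv u u <= 1).
Proof. by rewrite /norm2 -[X in _ <= X]sqrtr1 ler_sqrt. Qed.

End inner_product.

Lemma continuous_sum (R : numFieldType) (V : normedModType R) (T : topologicalType)
    (I : Type) (s : seq I) (F : I -> T -> V) :
  (forall i, continuous (F i)) -> continuous (fun x => \sum_(i <- s) F i x).
Proof.
move=> cF; elim: s => [|i s ih].
  by under eq_fun do rewrite big_nil; exact: cst_continuous.
under eq_fun do rewrite big_cons.
by move=> x; apply: cvgD; [exact: cF | exact: ih].
Qed.

Lemma linear_quadratic_ge0 (R : realFieldType) (a b : R) :
  (forall t, 0 <= t * b + t ^+ 2 * a) -> b = 0.
Proof.
move=> ab_ge0; pose u := `|a| + 1.
have u_gt0 : 0 < u by rewrite ltr_pwDr.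
have au : a - u < 0 by have := ler_norm a; rewrite /u; lra.
have := ab_ge0 (- b / u).
have -> : - b / u * b + (- b / u) ^+ 2 * a = b ^+ 2 * (a - u) / u ^+ 2.
  by field; rewrite gt_eqF.
rewrite pmulr_lge0 ?invr_gt0 ?exprn_gt0 // => b2au.
have : b ^+ 2 <= 0 by nra.
by move=> b2; apply/eqP; rewrite -sqrf_eq0 eq_le b2 sqr_ge0.
Qed.

Section rayleigh.
Context {R : realType} {d : nat}.
Implicit Types (u v z : 'rV[R]_d) (M : 'M[R]_d).

Lemma continuous_dotv u : continuous (dotv u).
Proof.
apply: continuous_sum => j x.
exact: (@continuousM R _ (fun=> u 0 j) (fun x : 'rV[R]_d => x 0 j) x
  (@cst_continuous _ _ _ x) (@coord_continuous R 1 d 0 j x)).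
Qed.

Lemma continuous_quadform M : continuous (fun z : 'rV[R]_d => dotv z (z *m M)).
Proof.
have coordM j : continuous (fun z : 'rV[R]_d => (z *m M) 0 j).
  have -> : (fun z : 'rV[R]_d => (z *m M) 0 j) = dotv (col j M)^T.
    by apply: funext => z; rewrite mxE; apply: eq_bigr => k _; rewrite !mxE mulrC.
  exact: continuous_dotv.
apply: continuous_sum => j x.
exact: (@continuousM R _ (fun z : 'rV[R]_d => z 0 j) (fun z => (z *m M) 0 j) x
  (@coord_continuous R 1 d 0 j x) (coordM j x)).
Qed.

Lemma continuous_dotvv : continuous (fun z : 'rV[R]_d => dotv z z).
Proof. by have := continuous_quadform 1%:M; under eq_fun do rewrite mulmx1. Qed.

Lemma compact_unit_sphere : compact [set z : 'rV[R]_d | dotv z z = 1].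
Proof.
apply: bounded_closed_compact.
  exists 1; split; rewrite ?num_real // => r r1 z /= z1.
  rewrite [X in X <= _]/Num.norm /= mx_normrE.
  apply: bigmax_le => [|[i j] _ /=]; first exact: ltW (lt_trans _ r1).
  have := sqr_coord_le_dotv z j; rewrite z1 (ord1 i) => zj1.
  have : `|z 0 j| ^+ 2 <= 1 by rewrite real_normK ?num_real.
  by have := normr_ge0 (z 0 j); nra.
have -> : [set z : 'rV[R]_d | dotv z z = 1] = (fun z => dotv z z) @^-1` [set 1] by [].
by apply: preimage_closed => [z _|]; [exact: continuous_dotvv | exact: closed_eq].
Qed.

Lemma rayleigh_minimizer M u : dotv u u = 1 ->
  exists2 v, dotv v v = 1 & forall z, dotv v (v *m M) * dotv z z <= dotv z (z *m M).
Proof.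
move=> u1; have [|v] := EVT_min_rV _ compact_unit_sphere
  (continuous_subspaceT (continuous_quadform M)); first by exists u.
rewrite inE => v1 vmin; exists v => // z.
have [z0|zn0] := eqVneq (dotv z z) 0.
  by rewrite z0 mulr0 (dotv_eq0 z z0) dot0v.
have zz_gt0 : 0 < dotv z z by rewrite lt_neqAle eq_sym zn0 dotv_ge0.
pose s := Num.sqrt (dotv z z).
have s_gt0 : 0 < s by rewrite sqrtr_gt0.
have ss : s ^+ 2 = dotv z z by rewrite sqr_sqrtr // ltW.
have := vmin (s^-1 *: z); rewrite inE /= dotvZl dotvZr mulrA -expr2 exprVn ss.
rewrite mulVf // => /(_ erefl); rewrite -scalemxAl dotvZl dotvZr mulrA -expr2.
by rewrite exprVn ss mulrC -ler_pdivlMr // mulrC.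
Qed.

Lemma rayleigh_minimizer_eigen M v : M^T = M -> dotv v v = 1 ->
    (forall z, dotv v (v *m M) * dotv z z <= dotv z (z *m M)) ->
  v *m M = dotv v (v *m M) *: v.
Proof.
move=> MT v1 vmin; set mu := dotv v (v *m M).
pose w := v *m M - mu *: v.
have wvM : dotv w (v *m M) = dotv w w + mu * dotv w v.
  by rewrite {2}/w dotvDr dotvNr dotvZr; ring.
have vME : v *m M = w + mu *: v by rewrite /w subrK.
clearbody w.
(* the quadratic form minus [mu] is nonnegative along the line [v + t w] *)
suff : dotv w w *+ 2 = 0.
  by move/eqP; rewrite mulrn_eq0 /= => /eqP/dotv_eq0 w0; rewrite vME w0 add0r.
apply: (@linear_quadratic_ge0 _ (dotv w (w *m M) - mu * dotv w w)) => t.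
have := vmin (v + t *: w).
rewrite mulmxDl -scalemxAl !dotvDl !dotvDr !dotvZl !dotvZr (dotv_mulmx_sym v w M MT).
by rewrite v1 wvM (dotvC v w) -/mu => ?; nra.
Qed.

Lemma lambda_min_le_quadform M lam u : M^T = M -> is_lambda_min M lam ->
  dotv u u = 1 -> lam <= dotv u (u *m M).
Proof.
move=> MT [_ lam_min] u1; have [v v1 vmin] := rayleigh_minimizer M u u1.
apply: le_trans (vmin u); rewrite u1 mulr1; apply/lam_min/eigenvalueP.
exists v; first exact: rayleigh_minimizer_eigen.
by apply: contra_eqN v1 => /eqP->; rewrite dot0v eq_sym oner_eq0.
Qed.

End rayleigh.

Section level_sets.
Context {d0 : measure_display} {T : measurableType d0} {R : realType}.
Variables (f : T -> R) (r : R).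
Hypothesis mf : measurable_fun setT f.

Lemma measurable_gt_level : measurable [set x | r < f x].
Proof. by rewrite -preimage_itvoy -[_ @^-1` _]setTI; exact: mf. Qed.

Lemma measurable_le_level : measurable [set x | f x <= r].
Proof. by rewrite -preimage_itvNyc -[_ @^-1` _]setTI; exact: mf. Qed.

End level_sets.

Section features.
Context {R : realType} {d : nat}.

Lemma continuous_measurable_rV {f : 'rV[R]_d -> R} :
  continuous f -> measurable_fun (setT : set (vecB R d)) f.
Proof.
move=> cf; apply: (measurability _ (measurable_realfun.RGenOpens.measurableE R)).
move=> _ [_ [x [y ->]] <-]; apply: sub_sigma_algebra; rewrite setTI.
exact: (proj1 (continuousP f) cf _ (interval_open _ _)).
Qed.

Lemma measurable_sqr_dotv (u : 'rV[R]_d) :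
  measurable_fun (setT : set (vecB R d)) (fun x => dotv u x ^+ 2).
Proof.
apply: measurable_realfun.measurable_funX.
exact: continuous_measurable_rV (continuous_dotv u).
Qed.

Lemma integrable_coordM (rho : probability (vecB R d) R) (i j : 'I_d) :
  rho [set x : vecB R d | norm2 x <= 1] = 1%E ->
  rho.-integrable setT (EFin \o (fun x : vecB R d => x 0 i * x 0 j)).
Proof.
move=> supp; set f := fun x : vecB R d => x 0 i * x 0 j.
have mf : measurable_fun setT f.
  apply: continuous_measurable_rV => x.
  exact: (@continuousM R _ (fun z : 'rV[R]_d => z 0 i) (fun z => z 0 j) x
    (@coord_continuous R 1 d 0 i x) (@coord_continuous R 1 d 0 j x)).
have mball : measurable [set x : vecB R d | dotv x x <= 1].
  exact: measurable_le_level _ _ (continuous_measurable_rV continuous_dotvv).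
have ball_null : rho (~` [set x : vecB R d | dotv x x <= 1]) = 0%E.
  rewrite probability_setC //.
  under eq_set do rewrite -norm2_le1.
  by rewrite supp subee.
apply/integrableP; split; first exact/measurable_realfun.measurable_EFinP.
apply: (@le_lt_trans _ _ (\int[rho]_(x in setT) (cst 1%E) x)%E); last first.
  by rewrite integral_cst // mul1e ltey_eq fin_num_measure.
apply: ae_ge0_le_integral => //.
  have -> : (fun x => `|(EFin \o f) x|%E) = EFin \o ((fun r : R => `|r|) \o f) by [].
  apply/measurable_realfun.measurable_EFinP.
  by apply: measurableT_comp; [exact: measurable_realfun.normr_measurable | exact: mf].
exists (~` [set x : vecB R d | dotv x x <= 1]); split => //; first exact: measurableC.
move=> x /= fx1 x1; apply: fx1 => _ /=; rewrite lee_fin normrM.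
have coord_le1 l : `|x 0 l| ^+ 2 <= 1.
  by rewrite real_normK ?num_real //; exact: le_trans (sqr_coord_le_dotv _ _) x1.
have := coord_le1 i; have := coord_le1 j.
by have := normr_ge0 (x 0 i); have := normr_ge0 (x 0 j); nra.
Qed.

End features.

Section Rintegral_sum.
Context {d0 : measure_display} {T : measurableType d0} {R : realType}.
Variables (mu : {measure set T -> \bar R}) (D : set T) (I : Type) (f : I -> T -> R).
Hypotheses (mD : measurable D) (intf : forall i, mu.-integrable D (EFin \o f i)).

Lemma integrable_Rsum (s : seq I) :
  mu.-integrable D (EFin \o (fun x => \sum_(i <- s) f i x)).
Proof.
have -> : EFin \o (fun x => \sum_(i <- s) f i x) =
    (fun x => (\sum_(i <- s) (EFin \o f i) x)%E).
  by apply: funext => x; rewrite /= sumEFin.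
by apply: integrable_sum => // i _; exact: intf.
Qed.

Lemma Rintegral_sum (s : seq I) :
  \int[mu]_(x in D) (\sum_(i <- s) f i x) = \sum_(i <- s) \int[mu]_(x in D) f i x.
Proof.
elim: s => [|i s ih].
  by under eq_Rintegral do rewrite big_nil; rewrite Rintegral_cst // mul0r big_nil.
under eq_Rintegral do rewrite big_cons.
by rewrite RintegralD ?big_cons ?ih //; exact: integrable_Rsum.
Qed.

End Rintegral_sum.

Section second_moment.
Context {R : realType} {d : nat}.
Variable rho : probability (vecB R d) R.

Lemma second_moment_sym : (second_moment rho)^T = second_moment rho.
Proof.
by apply/matrixP => i j; rewrite !mxE; apply: eq_Rintegral => x _; rewrite mulrC.
Qed.

Lemma second_moment_quadform (u : 'rV[R]_d) :
  rho [set x : vecB R d | norm2 x <= 1] = 1%E ->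
  Rintegral rho setT (fun x : vecB R d => dotv u x ^+ 2) =
  dotv u (u *m second_moment rho).
Proof.
move=> supp.
have intc i j : rho.-integrable setT
    (EFin \o (fun x : vecB R d => u 0 i * u 0 j * (x 0 i * x 0 j))).
  pose g := fun x : vecB R d => x 0 i * x 0 j.
  have -> : EFin \o (fun x : vecB R d => u 0 i * u 0 j * g x) =
      (fun x => ((u 0 i * u 0 j)%R%:E * (EFin \o g) x)%E) by [].
  exact: (integrableZl measurableT _ (integrable_coordM rho i j supp)).
have -> : (fun x : vecB R d => dotv u x ^+ 2) =
    (fun x => \sum_i \sum_j u 0 i * u 0 j * (x 0 i * x 0 j)).
  apply: funext => x; rewrite expr2 /dotv mulr_suml; apply: eq_bigr => i _.
  by rewrite mulr_sumr; apply: eq_bigr => j _; ring.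
rewrite Rintegral_sum //; last by move=> i; apply: integrable_Rsum.
under eq_bigr do rewrite Rintegral_sum //.
rewrite /dotv exchange_big /=; apply: eq_bigr => i _; rewrite mxE mulr_sumr.
apply: eq_bigr => j _.
rewrite !mxE (RintegralZl _ measurableT (integrable_coordM rho j i supp)).
ring.
Qed.

End second_moment.

Section probability_bounds.
Context {d0 : measure_display} {T : measurableType d0} {R : realType}.
Variable P : probability T R.

Lemma subgaussian_lower_tail (Y : T -> R) (m s2 r : R) :
  measurable_fun setT Y -> 0 < s2 -> r <= m ->
  (forall t, \int[P]_(x in setT) (expR (t * (Y x - m)))%:E <= (expR (s2 * t ^+ 2 / 2))%:E)%E ->
  (P [set x | (Y x <= r)%R] <= (expR (- (m - r) ^+ 2 / (2 * s2)))%:E)%E.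
Proof.
move=> mY s2_gt0; rewrite le_eqVlt => /predU1P[-> _|rm mgf].
  by rewrite subrr expr0n /= oppr0 mul0r expR0 probability_le1 //; exact: measurable_le_level.
pose X : {RV P >-> R} := HB.pack (fun x => m - Y x)
  (isMeasurableFun.Build _ _ _ _ (fun x => m - Y x)
    (measurable_realfun.measurable_funB (measurable_cst m) mY)).
pose t := (m - r) / s2.
have t_gt0 : 0 < t by rewrite divr_gt0 // subr_gt0.
have -> : [set x | Y x <= r] = [set x | m - r <= X x].
  by apply/seteqP; split => x /=; rewrite lerD2l lerN2.
apply: le_trans (chernoff X (m - r) t_gt0) _.
have -> : ('M_P X t = \int[P]_(x in setT) (expR (- t * (Y x - m)))%:E)%E.
  by rewrite /mmt_gen_fun unlock; apply: eq_integral => x _ /=; congr (EFin (expR _)); ring.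
apply: le_trans (lee_wpmul2r _ (mgf (- t))) _; first by rewrite lee_fin expR_ge0.
rewrite -EFinM lee_fin -expRD ler_expR sqrrN /t le_eqVlt; apply/orP; left; apply/eqP.
by field; exact: lt0r_neq0.
Qed.

Lemma ge0_tail_minorant_le_integral (Z : T -> R) (g : R -> R) (a : R) :
  measurable_fun setT Z -> (forall x, 0 <= Z x) ->
  measurable_fun setT g -> (forall s, 0 <= s <= a -> 0 <= g s) ->
  (forall s, (0 <= s <= a)%R -> ((g s)%:E <= P [set x | (s < Z x)%R])%E) ->
  (\int[lebesgue_measure]_(s in `[0%R, a]) (g s)%:E <= \int[P]_(x in setT) (Z x)%:E)%E.
Proof.
move=> mZ Z_ge0 mg g_ge0 g_le.
pose ZRV : {RV P >-> R} := HB.pack Z (isMeasurableFun.Build _ _ _ _ Z mZ).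
have -> : (\int[P]_(x in setT) (Z x)%:E = 'E_P[ZRV])%E by rewrite expectation_def.
rewrite ge0_expectation_ccdf //.
apply: (@le_trans _ _ (\int[lebesgue_measure]_(s in `[0%R, a]) ccdf ZRV s)%E).
  apply: ge0_le_integral => //.
  - exact: measurable_funS measurableT (@subsetT _ _)
      ((measurable_realfun.measurable_EFinP _ _).2 mg).
  - exact: measurable_funS measurableT (@subsetT _ _) (ccdf_measurable ZRV).
  move=> s; rewrite /= in_itv /= => s0a; rewrite /ccdf /distribution /pushforward.
  under [X in (_ <= P X)%E]eq_set => x do rewrite /= in_itv /= andbT.
  exact: g_le.
apply: ge0_subset_integral => //; first exact: measurable_funS (ccdf_measurable ZRV).
by move=> x /=; rewrite !in_itv /= => /andP[->].
Qed.

End probability_bounds.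

Section selected_arm.
Context {R : realType} {d k : nat} {d0 : measure_display} {O : measurableType d0}.
Variables (X : 'I_k -> O -> vecB R d) (sel : O -> 'I_k).
Hypotheses (mX : forall i, measurable_fun setT (X i))
  (msel : forall i, measurable [set w | sel w = i]).

Lemma measurable_selected (B : set (vecB R d)) :
  measurable B -> measurable [set w | B (X (sel w) w)].
Proof.
move=> mB; have -> : [set w | B (X (sel w) w)] =
    \bigcup_(i in [set: 'I_k]) ([set w | sel w = i] `&` X i @^-1` B).
  by apply/seteqP; split => [w Bw|w [i _ [<-]]] //; exists (sel w).
apply: fin_bigcup_measurable => [|i _]; first exact: finite_finset.
by apply: measurableI => //; rewrite -[X in measurable X]setTI; exact: mX.
Qed.

Lemma measurable_fun_selected (f : vecB R d -> R) :
  measurable_fun setT f -> measurable_fun setT (fun w => f (X (sel w) w)).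
Proof.
move=> mf _ A mA; rewrite setTI; apply: (measurable_selected (f @^-1` A)).
by rewrite -[X in measurable X]setTI; exact: mf.
Qed.

(* the selected arm lies in [B] as soon as all arms do *)
Lemma iid_law_selected_ge (P : probability O R) (rho : probability (vecB R d) R)
    (B : set (vecB R d)) :
  measurable B -> iid_law P rho X ->
  (\prod_(i < k) rho B <= P [set w | B (X (sel w) w)])%E.
Proof.
move=> mB iid; rewrite -(iid (fun=> B) (fun=> mB)).
apply: le_measure; rewrite ?inE; last by move=> w /(_ (sel w) I).
  apply: fin_bigcap_measurable => [|i _]; first exact: finite_finset.
  by rewrite -[X in measurable X]setTI; exact: mX.
exact: measurable_selected.
Qed.

End selected_arm.

Section tail_bounds.
Context {R : realType} {d : nat}.
Variables (rho : probability (vecB R d) R) (sigma lam : R) (u : 'rV[R]_d).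
Hypotheses (subg : subgauss_sq_proj rho (sigma ^+ 2)) (u1 : norm2 u = 1)
  (lam_le : lam <= Rintegral rho setT (fun x : vecB R d => dotv u x ^+ 2)).

Let gauss_tail s := expR (- (lam - s) ^+ 2 / (2 * sigma ^+ 2)).

Lemma gauss_tail_compl_bounds s : 0 <= 1 - gauss_tail s <= 1.
Proof.
apply/andP; split; last by rewrite lerBlDr lerDl expR_ge0.
rewrite /gauss_tail subr_ge0 expR_le1 mulNr oppr_le0.
by apply: divr_ge0; [exact: sqr_ge0 | apply: mulr_ge0 => //; exact: sqr_ge0].
Qed.

Lemma sqr_dotv_tail_ge s : s <= lam ->
  ((1 - gauss_tail s)%:E <= rho [set x | (s < dotv u x ^+ 2)%R])%E.
Proof.
move=> sl; pose m := Rintegral rho setT (fun x : vecB R d => dotv u x ^+ 2).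
have lam_m : lam <= m := lam_le.
have mY := measurable_sqr_dotv u.
have [sigma0|sigma_neq0] := eqVneq sigma 0.
  (* [x / 0 = 0], so the bound degenerates to [0] *)
  by rewrite /gauss_tail sigma0 expr0n /= mulr0 invr0 mulr0 expR0 subrr measure_ge0.
have s2_gt0 : 0 < sigma ^+ 2 by rewrite lt_neqAle sqr_ge0 andbT eq_sym sqrf_eq0.
have -> : [set x | s < dotv u x ^+ 2] = ~` [set x | dotv u x ^+ 2 <= s].
  by apply/seteqP; split => x /=; rewrite ltNge => /negP.
rewrite probability_setC; last exact: measurable_le_level.
have := subgaussian_lower_tail rho _ _ _ _ mY s2_gt0 (le_trans sl lam_m) (subg u u1).
rewrite -(fineK (fin_num_measure rho _ (measurable_le_level _ s mY))) -EFinB !lee_fin.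
suff : expR (- (m - s) ^+ 2 / (2 * sigma ^+ 2)) <= gauss_tail s by lra.
rewrite ler_expR !mulNr lerN2 ler_pM2r; last by rewrite invr_gt0; apply: mulr_gt0.
by rewrite ler_sqr ?nnegrE; lra.
Qed.

End tail_bounds.

Theorem mainTheorem6
  (R : realType) (d K k : nat) (rho : probability (vecB R d) R) (lam_x sigma : R)
  (d0 : measure_display) (O : measurableType d0) (P : probability O R)
  (X : 'I_k -> O -> vecB R d) (I : O -> 'I_k) (theta : 'rV[R]_d) :
  (* (A3) on the feature distribution rho *)
  rho [set x : vecB R d | norm2 x <= 1] = 1%E ->
  is_lambda_min (second_moment rho) lam_x -> 0 < lam_x ->
  subgauss_sq_proj rho (sigma ^+ 2) ->
  (* the current arm set has k <= K arms, with i.i.d. rho features *)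
  (k <= K)%N ->
  (forall i, measurable_fun setT (X i)) ->
  iid_law P rho X ->
  (* the arm selected by the agent: any measurable random index *)
  (forall i, measurable [set w | I w = i]) ->
  norm2 theta = 1 ->
  (\int[P]_(w in setT) ((dotv theta (X (I w) w)) ^+ 2)%:E
   >= \int[lebesgue_measure]_(s in `[0%R, lam_x])
        ((1 - expR (- ((lam_x - s) ^+ 2) / (2 * sigma ^+ 2))) ^+ K)%:E)%E.
Proof.
move=> supp lamM _ subg kK mX iid msel th1.
have lam_le : lam_x <= Rintegral rho setT (fun x : vecB R d => dotv theta x ^+ 2).
  rewrite second_moment_quadform //.
  exact: lambda_min_le_quadform _ _ _ (second_moment_sym rho) lamM (norm2_eq1 _ th1).
have mY := measurable_sqr_dotv theta.
apply: ge0_tail_minorant_le_integral.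
- exact: measurable_fun_selected mX msel _ mY.
- by move=> w; exact: sqr_ge0.
- apply: measurable_realfun.measurable_funX.
  apply: measurable_realfun.measurable_funB; first exact: measurable_cst.
  apply: measurableT_comp; first exact: measurable_realfun.measurable_expR.
  apply: measurable_realfun.measurable_funM; last exact: measurable_cst.
  apply: measurable_realfun.measurable_funN; apply: measurable_realfun.measurable_funX.
  by apply: measurable_realfun.measurable_funB; [exact: measurable_cst | exact: measurable_id].
- by move=> s _; have /andP[+ _] := gauss_tail_compl_bounds sigma lam_x s; exact: exprn_ge0.
move=> s /andP[_ sl].
have mB := measurable_gt_level _ s mY.
apply: le_trans (iid_law_selected_ge X I mX msel P rho _ mB iid).
have := sqr_dotv_tail_ge _ _ _ _ subg th1 lam_le _ sl.
rewrite -(fineK (fin_num_measure rho _ mB)) prodEFin prodr_const card_ord !lee_fin.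
have /andP[compl_ge0 compl_le1] := gauss_tail_compl_bounds sigma lam_x s.
move=> compl_le; apply: le_trans (ler_wiXn2l compl_ge0 compl_le1 kK) _.
by apply: lerXn2r; rewrite ?nnegrE // (le_trans compl_ge0 compl_le).
Qed.
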